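(* Assume (C), $c>a$ and $d<b$. (a) If $c+d\ge 0$, then the set $\mathcal E=\{(x,y,z)\in S^2:\ z\ge \frac{a+dx}{c}\}$ is invariant under $V$, i.e. $V(\mathcal E)\subseteq \mathcal E$. (b) If $c+d<0$, then the set $F=\{(x,y,z)\in S^2:\ z< \frac{a+dx}{c}\}$ is invariant under $V$, i.e. $V(F)\subseteq F$.
   Context: Let $S^2=\{(x,y,z)\in\mathbb{R}^3:\ x,y,z\ge 0,\ x+y+z=1\}$. Fix real parameters $a,b,c,d$ satisfying condition (C): $0\le a\le 1$, $0\le b\le 1$, $-(1-a)\le c\le 1+a$, $-(1-b)\le d\le 1-a$. Let $V(x,y,z)=\big(x(1-b+dy),\ y(1-a-dx+cz),\ z(1-cy)+ay+bx\big)$; under (C) it maps $S^2$ into itself. *)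

From Stdlib Require Import Reals.
Open Scope R_scope.

Definition inS2 (p : R * R * R) : Prop :=
  let '(x, y, z) := p in 0 <= x /\ 0 <= y /\ 0 <= z /\ x + y + z = 1.

Definition condC (a b c d : R) : Prop :=
  0 <= a <= 1 /\ 0 <= b <= 1 /\ -(1 - a) <= c <= 1 + a /\ -(1 - b) <= d <= 1 - a.

Definition V (a b c d : R) (p : R * R * R) : R * R * R :=
  let '(x, y, z) := p in
  (x * (1 - b + d * y), y * (1 - a - d * x + c * z), z * (1 - c * y) + a * y + b * x).

Definition setE (a c d : R) (p : R * R * R) : Prop :=
  inS2 p /\ (let '(x, y, z) := p in z >= (a + d * x) / c).

Definition setF (a c d : R) (p : R * R * R) : Prop :=
  inS2 p /\ (let '(x, y, z) := p in z < (a + d * x) / c).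

(* Write m(x, z) = c z - (a + d x), so that E = {m >= 0} and F = {m < 0} on the simplex
   (c > a >= 0 makes c positive).  A direct computation gives
     m(V p) = m(p) (1 - c y) + (c + d) x (b - d y),
   where b - d y >= 0 because d < b, and 1 - c y has the right sign on each set:
   on E it is at least 1 - c + a + (c + d) x >= 0, and when c + d < 0 we have c < 1 - b <= 1.
   Hence the sign of m is preserved in both cases. *)

From Stdlib Require Import Reals Lra Psatz.
Open Scope R_scope.

Definition margin (a c d : R) (p : R * R * R) : R :=
  let '(x, _, z) := p in c * z - (a + d * x).

Lemma Rdiv_le_iff (u c z : R) : 0 < c -> (u / c <= z <-> u <= c * z).
Proof.
  intros Hc. replace u with (c * (u / c)) at 2 by (field; lra).
  split; intros H.
  - apply Rmult_le_compat_l; lra.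
  - apply Rmult_le_reg_l with c; lra.
Qed.

Lemma Rlt_div_iff (u c z : R) : 0 < c -> (z < u / c <-> c * z < u).
Proof.
  intros Hc. pose proof (Rdiv_le_iff u c z Hc) as Hle.
  split; intros Hlt; apply Rnot_le_lt; intros Hge; apply Hle in Hge; lra.
Qed.

Lemma setE_margin (a c d : R) (p : R * R * R) :
  0 < c -> setE a c d p <-> inS2 p /\ 0 <= margin a c d p.
Proof.
  intros Hc. destruct p as [[x y] z]. unfold setE, margin.
  pose proof (Rdiv_le_iff (a + d * x) c z Hc). split; intros [Hp Hm]; split; auto; lra.
Qed.

Lemma setF_margin (a c d : R) (p : R * R * R) :
  0 < c -> setF a c d p <-> inS2 p /\ margin a c d p < 0.
Proof.
  intros Hc. destruct p as [[x y] z]. unfold setF, margin.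
  pose proof (Rlt_div_iff (a + d * x) c z Hc). split; intros [Hp Hm]; split; auto; lra.
Qed.

Lemma inS2_V (a b c d : R) (p : R * R * R) :
  condC a b c d -> inS2 p -> inS2 (V a b c d p).
Proof.
  destruct p as [[x y] z]. unfold condC, inS2, V.
  intros [[Ha0 Ha1] [[Hb0 Hb1] [[Hc0 Hc1] [Hd0 Hd1]]]] [Hx [Hy [Hz Hsum]]].
  assert (Hyz : 0 <= y * z) by (apply Rmult_le_pos; lra).
  split; [|split; [|split]].
  - assert (0 <= (1 - b) * (1 - y) + (1 - b + d) * y) by nra. nra.
  - assert (d * x <= (1 - a) * x) by nra.
    assert (- (1 - a) * z <= c * z) by nra.
    assert (0 <= 1 - a - d * x + c * z) by nra. nra.
  - assert (c * (y * z) <= (1 + a) * (y * z)) by (apply Rmult_le_compat_r; lra).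
    assert (0 <= z * (1 - y) + a * (y * (1 - z)) + b * x)
      by (repeat apply Rplus_le_le_0_compat; repeat apply Rmult_le_pos; lra).
    nra.
  - nra.
Qed.

Lemma margin_V (a b c d : R) (p : R * R * R) :
  margin a c d (V a b c d p) =
  let '(x, y, _) := p in margin a c d p * (1 - c * y) + (c + d) * x * (b - d * y).
Proof. destruct p as [[x y] z]. simpl. ring. Qed.

Lemma b_sub_dy_nonneg (b d y : R) : 0 <= b -> d < b -> 0 <= y <= 1 -> 0 <= b - d * y.
Proof. intros. nra. Qed.

Lemma one_sub_cy_nonneg_on_E (a b c d x y z : R) :
  condC a b c d -> inS2 (x, y, z) -> 0 <= c + d -> 0 <= margin a c d (x, y, z) ->
  0 <= 1 - c * y.
Proof.
  unfold condC, inS2, margin. intros [_ [_ [[_ Hc1] _]]] [Hx [_ [_ Hsum]]] Hcd Hm.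
  assert (0 <= (c + d) * x) by (apply Rmult_le_pos; lra).
  replace (1 - c * y) with ((1 + a - c) + (c + d) * x + (c * z - (a + d * x)))
    by (replace y with (1 - x - z) by lra; ring).
  lra.
Qed.

Lemma one_sub_cy_pos_of_neg_sum (a b c d y : R) :
  condC a b c d -> 0 < c -> c + d < 0 -> 0 <= y <= 1 -> 0 < 1 - c * y.
Proof.
  unfold condC. intros [_ [[Hb0 _] [_ [Hd0 _]]]] Hc Hcd Hy.
  assert (c * y <= c * 1) by (apply Rmult_le_compat_l; lra).
  lra.
Qed.

Theorem lemma4p2 (a b c d : R) :
  condC a b c d -> c > a -> d < b ->
  (c + d >= 0 -> forall p, setE a c d p -> setE a c d (V a b c d p)) /\
  (c + d < 0 -> forall p, setF a c d p -> setF a c d (V a b c d p)).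
Proof.
  intros HC Hca Hdb.
  assert (Hb : 0 <= b) by (destruct HC as [_ [[Hb _] _]]; exact Hb).
  assert (Hc : 0 < c) by (destruct HC as [[Ha _] _]; lra).
  split; intros Hcd p.
  - rewrite !setE_margin by exact Hc. intros [Hp Hm].
    split; [exact (inS2_V a b c d p HC Hp) |]. rewrite margin_V.
    destruct p as [[x y] z]. pose proof Hp as [Hx [Hy [Hz Hsum]]].
    assert (Hcy : 0 <= 1 - c * y) by (apply (one_sub_cy_nonneg_on_E a b c d x y z); auto; lra).
    assert (Hdy : 0 <= b - d * y) by (apply b_sub_dy_nonneg; auto; lra).
    apply Rplus_le_le_0_compat; repeat apply Rmult_le_pos; lra.
  - rewrite !setF_margin by exact Hc. intros [Hp Hm].
    split; [exact (inS2_V a b c d p HC Hp) |]. rewrite margin_V.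
    destruct p as [[x y] z]. pose proof Hp as [Hx [Hy [Hz Hsum]]].
    assert (Hcy : 0 < 1 - c * y) by (apply (one_sub_cy_pos_of_neg_sum a b c d y); auto; lra).
    assert (Hdy : 0 <= b - d * y) by (apply b_sub_dy_nonneg; auto; lra).
    assert (0 < - margin a c d (x, y, z) * (1 - c * y)) by (apply Rmult_lt_0_compat; lra).
    assert (0 <= - (c + d) * x * (b - d * y)) by (repeat apply Rmult_le_pos; lra).
    lra.
Qed.
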